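(* Let $f_1,\dots,f_n$ be monotone linear functions that are not colinear. Then every locally optimal permutation for $f_1,\dots,f_n$ is counterclockwise.
   Context: A linear function is $f(x)=ax+b$; monotone means $a>0$; identical means $f(x)=x$. $\vec f=(b,1-a)^\top$ and $\theta(f)\in[0,2\pi)$ is its polar angle ($\bot$ if $\vec f=0$). For a permutation $\sigma$ of $[n]$, $f^\sigma=f_{\sigma(n)}\circ\cdots\circ f_{\sigma(1)}$; $g\le h$ for functions means pointwise. For integers $1\le\ell\le m<r\le n$, $\sigma_{\ell,m,r}$ is the permutation obtained from $\sigma$ by swapping the adjacent blocks $(\sigma(\ell),\dots,\sigma(m))$ and $(\sigma(m+1),\dots,\sigma(r))$: $\sigma_{\ell,m,r}(i)=\sigma(i)$ for $i<\ell$ or $i>r$, $\sigma_{\ell,m,r}(i)=\sigma(i-\ell+m+1)$ for $\ell\le i<\ell-m+r$, and $\sigma_{\ell,m,r}(i)=\sigma(i+m-r)$ for $\ell-m+r\le i\le r$. The neighborhood is $N(\sigma)=\{\sigma_{\ell,m,r}\mid 1\le\ell\le m<r\le n\}$, and $\sigma$ is locally optimal if $f^\sigma\le f^\mu$ for all $\mu\in N(\sigma)$. $\sigma$ is counterclockwise if, after discarding positions $i$ with $f_{\sigma(i)}$ identical, there is $k$ such that $\theta(f_{\sigma(k)})\le\cdots\le\theta(f_{\sigma(n)})\le\theta(f_{\sigma(1)})\le\cdots\le\theta(f_{\sigma(k-1)})$. $f_1,\dots,f_n$ are colinear if there is $\lambda$ with $\theta(f_i)-\lambda\in\{0,\pi\}+2\pi\mathbb{Z}$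 or $\theta(f_i)=\bot$ for all $i$. *)

From Stdlib Require Import Reals ZArith ClassicalEpsilon ClassicalDescription.
From mathcomp Require Import all_boot all_fingroup.

Set Implicit Arguments.
Unset Strict Implicit.
Unset Printing Implicit Defensive.

Local Open Scope R_scope.

Record linfun := LinFun { la : R; lb : R }.

Definition evalf (f : linfun) (x : R) : R := la f * x + lb f.

Definition monotone (f : linfun) : Prop := 0 < la f.

Definition identical (f : linfun) : Prop := forall x : R, evalf f x = x.

Definition identicalb (f : linfun) : bool :=
  if excluded_middle_informative (identical f) then true else false.

Definition vecf (f : linfun) : R * R := (lb f, 1 - la f).

Definition polar_angle (v : R * R) : option R :=
  let x := fst v in let y := snd v in
  if excluded_middle_informative (x = 0 /\ y = 0) then None
  else Some (epsilon (inhabits 0) (fun t =>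
          0 <= t < 2 * PI /\
          x = sqrt (x * x + y * y) * cos t /\
          y = sqrt (x * x + y * y) * sin t)).

Definition theta (f : linfun) : option R := polar_angle (vecf f).

(* f^sigma = f_{sigma(n)} o ... o f_{sigma(1)} (positions 0-based here). *)
Definition fcomp (n : nat) (fs : 'I_n -> linfun) (sigma : {perm 'I_n}) : R -> R :=
  foldl (fun g i => fun x => evalf (fs (sigma i)) (g x)) (fun x => x) (enum 'I_n).

(* The position map of sigma_{l,m,r}, on 1-based positions p:
   sigma_{l,m,r}(p) = sigma(bswap l m r p). *)
Definition bswap (l m r p : nat) : nat :=
  (if (p < l) || (r < p) then p
  else if p < l + (r - m) then p - l + m + 1
  else p + m - r)%N.

Definition is_block_swap (n : nat) (sigma mu : {perm 'I_n}) (l m r : nat) : Prop :=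
  forall i j : 'I_n, (j.+1 = bswap l m r i.+1)%N -> mu i = sigma j.

Definition in_nbhd (n : nat) (sigma mu : {perm 'I_n}) : Prop :=
  exists l m r, (1 <= l)%N /\ (l <= m)%N /\ (m < r)%N /\ (r <= n)%N /\ is_block_swap sigma mu l m r.

Definition locally_optimal (n : nat) (fs : 'I_n -> linfun) (sigma : {perm 'I_n}) : Prop :=
  forall mu : {perm 'I_n}, in_nbhd sigma mu ->
    forall x : R, fcomp fs sigma x <= fcomp fs mu x.

Definition Rleb (x y : R) : bool := if Rle_dec x y then true else false.

(* Angles theta(f_{sigma(1)}), ..., theta(f_{sigma(n)}) after discarding the
   positions where f_{sigma(i)} is identical (for these theta is never bottom). *)
Definition angle_seq (n : nat) (fs : 'I_n -> linfun) (sigma : {perm 'I_n}) : seq R :=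
  pmap (fun i => theta (fs (sigma i)))
       [seq i <- enum 'I_n | ~~ identicalb (fs (sigma i))].

Definition counterclockwise (n : nat) (fs : 'I_n -> linfun) (sigma : {perm 'I_n}) : Prop :=
  exists k : nat, sorted Rleb (rot k (angle_seq fs sigma)).

Definition colinear (n : nat) (fs : 'I_n -> linfun) : Prop :=
  exists lambda : R, forall i : 'I_n,
    theta (fs i) = None \/
    exists t, theta (fs i) = Some t /\ exists z : Z, t - lambda = IZR z * PI.

(* For blocks X, Y of functions, the compositions [Y o X] and [X o Y] differ by the
   constant [- cross (vec X) (vec Y)], so local optimality (no swap of adjacent blocks
   lowers the composition) makes the vector of every block turn counterclockwise, by at most
   [PI], towards the vector of the next block. After discarding identical functions,
   consecutive vectors therefore turn by an angle in [[0, PI)]: an angle [PI] would force all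
   vectors onto one line, against non-colinearity. An induction on the length of a window
   then shows that its angles turn at most once around: otherwise the vector of a shorter
   window would have to lie on an arc that the first (or last) vector overshoots. A sequence
   of angles in [[0, 2 PI)] turning at most once around is a rotation of a sorted one. *)

From Stdlib Require Import Reals Lra Lia ZArith ClassicalEpsilon Classical.
From mathcomp Require Import all_boot all_fingroup zify.

Set Implicit Arguments.
Unset Strict Implicit.
Unset Printing Implicit Defensive.

Open Scope R_scope.

Lemma norm_pos (x y : R) : ~ (x = 0 /\ y = 0) -> 0 < sqrt (x * x + y * y).
Proof.
move=> xy_nz; apply: sqrt_lt_R0; case: (Req_dec x 0) => [x0|]; last nra.
have : y <> 0 by tauto. nra.
Qed.

Lemma polar_form (x y : R) : ~ (x = 0 /\ y = 0) ->
  exists t, 0 <= t < 2 * PI /\ x = sqrt (x * x + y * y) * cos t /\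
            y = sqrt (x * x + y * y) * sin t.
Proof.
move=> xy_nz; have r_pos := norm_pos xy_nz; set r := sqrt (x * x + y * y) in r_pos *.
have rr : r * r = x * x + y * y by apply: sqrt_sqrt; nra.
set c := x / r.
have x_rc : x = r * c by rewrite /c; field; lra.
have c_bound : -1 <= c <= 1.
{ have : c * c <= 1.
  { apply: (Rmult_le_reg_r (r * r)); first nra.
    replace (c * c * (r * r)) with ((r * c) * (r * c)) by ring. rewrite -x_rc. nra. }
  split; nra. }
have cos_ac : cos (acos c) = c by apply: cos_acos.
have sin_ac : sin (acos c) = Rabs (y / r).
{ rewrite sin_acos // -sqrt_Rsqr_abs /Rsqr /c; f_equal.
  apply: (Rmult_eq_reg_r (r * r)); last nra.
  by field_simplify; lra. }
have := acos_bound c; have := PI_RGT_0 => PI_pos ac_bound.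
case: (Rle_dec 0 y) => y_sign.
- exists (acos c); split; first lra.
  rewrite cos_ac sin_ac Rabs_right; first (split; [exact: x_rc|field; lra]).
  apply: Rle_ge; apply: Rmult_le_pos; [lra|left; apply: Rinv_0_lt_compat; lra].
- have ac_pos : 0 < acos c.
  { case: (Rle_lt_or_eq_dec _ _ (proj1 ac_bound)) => // ac0.
    have : y / r <> 0 by rewrite /Rdiv; apply: Rmult_integral_contrapositive;
      split; [lra|apply: Rinv_neq_0_compat; lra].
    move=> /Rabs_pos_lt; rewrite -sin_ac -ac0 sin_0; lra. }
  exists (2 * PI - acos c); split; first lra.
  rewrite cos_minus sin_minus cos_2PI sin_2PI cos_ac sin_ac Rabs_left; last first.
  { have : 0 < / r by apply: Rinv_0_lt_compat. rewrite /Rdiv. nra. }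
  split; [rewrite x_rc; ring|field; lra].
Qed.

(* [theta] with the junk value [0] at identical functions. *)
Definition angle (f : linfun) : R := if theta f is Some t then t else 0.

Definition polar (rho t : R) : R * R := (rho * cos t, rho * sin t).

Definition cross (p q : R * R) : R := p.1 * q.2 - p.2 * q.1.

Lemma identicalE (f : linfun) : identical f <-> lb f = 0 /\ 1 - la f = 0.
Proof.
rewrite /identical /evalf; split=> [fx|[b0 a1] x].
- by have := fx 0; have := fx 1; lra.
- rewrite b0; have -> : la f = 1 by lra. ring.
Qed.

Lemma theta_polar (f : linfun) : ~ identical f ->
  theta f = Some (angle f) /\ 0 <= angle f < 2 * PI /\
  exists rho, 0 < rho /\ vecf f = polar rho (angle f).
Proof.
rewrite identicalE /angle /theta /polar_angle /vecf /= => f_nz.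
case: ClassicalDescription.excluded_middle_informative => [//|_] /=.
set P := (fun t => _).
have [t_bound [b_eq a_eq]] := epsilon_spec (inhabits 0) P (polar_form f_nz).
do 2 (split=> //).
by exists (sqrt (lb f * lb f + (1 - la f) * (1 - la f)));
  split; [exact: norm_pos | rewrite /polar -b_eq -a_eq].
Qed.

Lemma theta_identical (f : linfun) : identical f -> theta f = None.
Proof.
rewrite identicalE /theta /polar_angle /vecf /=.
by case: ClassicalDescription.excluded_middle_informative.
Qed.

Lemma polar_of_neq0 (w : R * R) : w <> (0, 0) -> exists rho t, 0 < rho /\ w = polar rho t.
Proof.
case: w => x y w_nz; have xy_nz : ~ (x = 0 /\ y = 0) by move=> [x0 y0]; apply: w_nz; rewrite x0 y0.
have [t [_ [x_eq y_eq]]] := polar_form xy_nz.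
by exists (sqrt (x * x + y * y)), t; split; [exact: norm_pos | rewrite /polar -x_eq -y_eq].
Qed.

Lemma cross_polar r1 a r2 b : cross (polar r1 a) (polar r2 b) = r1 * r2 * sin (b - a).
Proof. rewrite /cross /polar /= sin_minus; ring. Qed.

Lemma cross_polar_ge0 r1 a r2 b : 0 < r1 -> 0 < r2 ->
  0 <= cross (polar r1 a) (polar r2 b) <-> 0 <= sin (b - a).
Proof.
move=> r1_pos r2_pos; rewrite cross_polar.
have r12_pos : 0 < r1 * r2 by apply: Rmult_lt_0_compat.
split=> [cross_ge|sin_ge]; last by apply: Rmult_le_pos; lra.
by apply: Rnot_lt_le => sin_lt; nra.
Qed.

Lemma sin_add_2PI_mul (x : R) (k : Z) : sin (x + 2 * PI * IZR k) = sin x.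
Proof.
case: (Z_le_gt_dec 0 k) => k_sign.
- rewrite -(Z2Nat.id k k_sign) -INR_IZR_INZ -(sin_period x (Z.to_nat k)).
  f_equal; ring.
- rewrite -(sin_period _ (Z.to_nat (- k))) INR_IZR_INZ Z2Nat.id; last lia.
  rewrite opp_IZR; f_equal; ring.
Qed.

Lemma angle_reduce (x : R) : exists y (j : Z), 0 <= y < 2 * PI /\ y = x + 2 * PI * IZR j.
Proof.
have PI_pos := PI_RGT_0.
have [up_gt up_le] := archimed (x / (2 * PI)).
exists (x - 2 * PI * (IZR (up (x / (2 * PI))) - 1)), (1 - up (x / (2 * PI)))%Z.
rewrite minus_IZR; split; last ring.
have : x / (2 * PI) * (2 * PI) = x by field; lra.
split; nra.
Qed.

(* A point [psi] of the arc from [al] to [be] (of length [TH < 2 PI]) lies strictly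
   clockwise of [w] when [al] is within [d < PI] of [w] and [d + TH] exceeds a full turn. *)
Lemma sin_neg_beyond_arc (w al be psi d TH : R) (ka kb : Z) :
  0 <= d < PI -> TH < 2 * PI -> 2 * PI < d + TH ->
  al = w + d + 2 * PI * IZR ka -> be = al + TH + 2 * PI * IZR kb ->
  0 <= sin (psi - al) -> 0 <= sin (be - psi) -> sin (psi - w) < 0.
Proof.
move=> d_bound TH_lt dTH_gt al_eq be_eq sin_al sin_be.
have [x [j [x_bound x_eq]]] := angle_reduce (psi - al).
have x_le : x <= PI.
{ apply: Rnot_lt_le => x_gt.
  have : sin x < 0 by apply: sin_lt_0; lra.
  rewrite x_eq sin_add_2PI_mul; lra. }
have x_ge : TH - PI <= x.
{ apply: Rnot_lt_le => x_lt.
  have : sin (TH - x) < 0 by apply: sin_lt_0; lra.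
  replace (TH - x) with (be - psi + 2 * PI * IZR (- (kb + j))); last first.
  { rewrite opp_IZR plus_IZR be_eq x_eq; ring. }
  rewrite sin_add_2PI_mul; lra. }
replace (psi - w) with (x + d + 2 * PI * IZR (ka - j)); last first.
{ rewrite minus_IZR x_eq al_eq; ring. }
rewrite sin_add_2PI_mul; apply: sin_lt_0; lra.
Qed.

Definition turn (a b : R) : R := if Rle_dec a b then b - a else b - a + 2 * PI.

Lemma turnE (a b : R) : exists e : Z, turn a b = b - a + 2 * PI * IZR e.
Proof. by rewrite /turn; case: (Rle_dec a b) => ab; [exists 0%Z|exists 1%Z]; rewrite /=; ring. Qed.

Lemma turn_bounds (a b : R) : 0 <= a < 2 * PI -> 0 <= b < 2 * PI ->
  0 <= turn a b < 2 * PI.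
Proof. rewrite /turn => ? ?; case: (Rle_dec a b) => [|/Rnot_le_lt] /=; lra. Qed.

Lemma cross_polar_turn r1 a r2 b :
  cross (polar r1 a) (polar r2 b) = r1 * r2 * sin (turn a b).
Proof. by have [e ->] := turnE a b; rewrite sin_add_2PI_mul cross_polar. Qed.

Lemma angle_eq_of_full_turn a b (W : Z) : 0 <= a < 2 * PI -> 0 <= b < 2 * PI ->
  2 * PI = b - a + 2 * PI * IZR W -> b = a.
Proof.
move=> a_bd b_bd turn_eq; have PI_pos := PI_RGT_0.
have [W_le0|W_ge1] : (W <= 0)%Z \/ (1 <= W)%Z by lia.
  by move/IZR_le: W_le0; nra.
have [W_eq1|W_ge2] : W = 1%Z \/ (2 <= W)%Z by lia.
  by move: turn_eq; rewrite W_eq1 /=; lra.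
by move/IZR_le: W_ge2; nra.
Qed.

Lemma RlebP (x y : R) : reflect (x <= y) (Rleb x y).
Proof. by rewrite /Rleb; case: Rle_dec => h; constructor. Qed.

Fixpoint total_turn (x : R) (t : seq R) : R :=
  if t is y :: t' then turn x y + total_turn y t' else 0.

Fixpoint descents (x : R) (t : seq R) : nat :=
  if t is y :: t' then ((~~ Rleb x y) + descents y t')%N else 0%N.

Lemma total_turn_rcons x t y : total_turn x (rcons t y) = total_turn x t + turn (last x t) y.
Proof. by elim: t x => [|z t IHt] x /=; rewrite ?IHt; ring. Qed.

Lemma total_turnE x t : total_turn x t = last x t - x + 2 * PI * INR (descents x t).
Proof.
elim: t x => [|y t IHt] x /=; first ring.
rewrite IHt plus_INR /turn /Rleb; case: (Rle_dec x y) => _ /=; ring.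
Qed.

Lemma descents0_path x t : descents x t = 0%N -> path Rleb x t.
Proof. by elim: t x => [|y t IHt] x //=; case: Rleb => //= /IHt. Qed.

Lemma descents1_split x t : descents x t = 1%N ->
  exists t1 y t2, t = t1 ++ y :: t2 /\ path Rleb x t1 /\ path Rleb y t2.
Proof.
elim: t x => [|z t IHt] x //=; case xz: (Rleb x z) => /=.
- move=> /IHt [t1 [y [t2 [-> [path1 path2]]]]].
  by exists (z :: t1), y, t2; rewrite /= xz.
- by move=> [/descents0_path path_zt]; exists [::], z, t.
Qed.

Lemma rot_sorted_of_total_turn x t : 0 <= last x t -> x < 2 * PI ->
  total_turn x t <= 2 * PI -> exists k, sorted Rleb (rot k (x :: t)).
Proof.
rewrite total_turnE => last_ge x_lt; have PI_pos := PI_RGT_0.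
case d_eq: (descents x t) => [|[|d]] turn_le.
- by exists 0%N; rewrite rot0 /= descents0_path.
- have [t1 [y [t2 [t_eq [path1 path2]]]]] := descents1_split d_eq.
  exists (size (x :: t1)); rewrite t_eq -cat_cons rot_size_cat /= cat_path path2 /= path1.
  have : last x t = last y t2 by rewrite t_eq last_cat.
  by move: turn_le => /= turn_le last_eq; rewrite andbT; apply/RlebP; lra.
- have : 2 <= INR d.+2 by rewrite !S_INR; have := pos_INR d; lra.
  nra.
Qed.

Definition vlin (c : R) (p q : R * R) : R * R := (c * p.1 + q.1, c * p.2 + q.2).
Definition vscale (c : R) (p : R * R) : R * R := (c * p.1, c * p.2).

Lemma cross_vlinl c p q w : cross (vlin c p q) w = c * cross p w + cross q w.
Proof. rewrite /cross /=; ring. Qed.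
Lemma cross_vlinr c p q w : cross w (vlin c p q) = c * cross w p + cross w q.
Proof. rewrite /cross /=; ring. Qed.
Lemma cross_vscalel c p q : cross (vscale c p) q = c * cross p q.
Proof. rewrite /cross /=; ring. Qed.
Lemma cross_vscaler c p q : cross p (vscale c q) = c * cross p q.
Proof. rewrite /cross /=; ring. Qed.
Lemma crossC p q : cross p q = - cross q p.
Proof. rewrite /cross; ring. Qed.
Lemma crossvv p : cross p p = 0.
Proof. rewrite /cross; ring. Qed.

Lemma vlin_eq0 c p q : vlin c p q = (0, 0) -> q = vscale (- c) p.
Proof. by case: p q => [p1 p2] [q1 q2] [e1 e2]; rewrite /vscale /=; f_equal; lra. Qed.

Lemma cross_eq0_trans e p q : e <> (0, 0) -> cross e p = 0 -> cross e q = 0 -> cross p q = 0.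
Proof.
case: e p q => [e1 e2] [p1 p2] [q1 q2]; rewrite /cross /= => e_nz ep eq.
have e1_eq : e1 * (p1 * q2 - p2 * q1) = p1 * (e1 * q2 - e2 * q1) - q1 * (e1 * p2 - e2 * p1)
  by ring.
have e2_eq : e2 * (p1 * q2 - p2 * q1) = p2 * (e1 * q2 - e2 * q1) - q2 * (e1 * p2 - e2 * p1)
  by ring.
rewrite ep eq in e1_eq e2_eq.
have [e1_0|e1_nz] := Req_dec e1 0; last by apply: (Rmult_eq_reg_l e1); lra.
have [e2_0|e2_nz] := Req_dec e2 0; last by apply: (Rmult_eq_reg_l e2); lra.
by case: e_nz; rewrite e1_0 e2_0.
Qed.

Lemma cross_eq0_independent p q w : cross p q <> 0 -> cross p w = 0 -> cross q w = 0 ->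
  w = (0, 0).
Proof.
case: p q w => [p1 p2] [q1 q2] [w1 w2]; rewrite /cross /= => pq pw qw.
have w1_eq : (p1 * q2 - p2 * q1) * w1 = q1 * (p1 * w2 - p2 * w1) - p1 * (q1 * w2 - q2 * w1)
  by ring.
have w2_eq : (p1 * q2 - p2 * q1) * w2 = q2 * (p1 * w2 - p2 * w1) - p2 * (q1 * w2 - q2 * w1)
  by ring.
rewrite pw qw in w1_eq w2_eq.
by f_equal; apply: (Rmult_eq_reg_l (p1 * q2 - p2 * q1)); lra.
Qed.

Definition lcomp (g f : linfun) : linfun := LinFun (la g * la f) (la g * lb f + lb g).

Definition id_lin : linfun := LinFun 1 0.

Definition compose (s : seq linfun) : linfun := foldl (fun h f => lcomp f h) id_lin s.

Lemma evalf_lcomp g f x : evalf (lcomp g f) x = evalf g (evalf f x).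
Proof. rewrite /evalf /=; ring. Qed.

Lemma lcompA h g f : lcomp h (lcomp g f) = lcomp (lcomp h g) f.
Proof. rewrite /lcomp /=; f_equal; ring. Qed.

Lemma lcomp_id f : lcomp f id_lin = f.
Proof. by case: f => a b; rewrite /lcomp /=; f_equal; ring. Qed.

Lemma id_lcomp f : lcomp id_lin f = f.
Proof. by case: f => a b; rewrite /lcomp /=; f_equal; ring. Qed.

Lemma vecf_lcomp g f : vecf (lcomp g f) = vlin (la g) (vecf f) (vecf g).
Proof. rewrite /vecf /vlin /=; f_equal; ring. Qed.

Lemma identical_id f : identical f -> f = id_lin.
Proof. by case: f => a b /identicalE /= [-> a1]; rewrite /id_lin; f_equal; lra. Qed.

Lemma foldl_compose s h : foldl (fun h f => lcomp f h) h s = lcomp (compose s) h.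
Proof.
elim: s h => [|f s IHs] h /=; first by rewrite id_lcomp.
by rewrite /compose /= !IHs lcomp_id lcompA.
Qed.

Lemma compose_cat s1 s2 : compose (s1 ++ s2) = lcomp (compose s2) (compose s1).
Proof. by rewrite /compose foldl_cat foldl_compose. Qed.

Lemma compose1 f : compose [:: f] = f.
Proof. by rewrite /compose /= lcomp_id. Qed.

Lemma compose_cons f s : compose (f :: s) = lcomp (compose s) f.
Proof. by rewrite -cat1s compose_cat compose1. Qed.

Lemma compose_rcons s f : compose (rcons s f) = lcomp f (compose s).
Proof. by rewrite /compose foldl_rcons. Qed.

Lemma evalf_compose s x : evalf (compose s) x = foldl (fun y f => evalf f y) x s.
Proof.
elim/last_ind: s => [|s f IHs]; first by rewrite /evalf /=; ring.
by rewrite compose_rcons evalf_lcomp IHs foldl_rcons.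
Qed.

Definition monotoneb (f : linfun) : bool := if Rlt_dec 0 (la f) then true else false.

Lemma monotonebP f : reflect (monotone f) (monotoneb f).
Proof. by rewrite /monotoneb /monotone; case: Rlt_dec => h; constructor. Qed.

Lemma compose_monotone s : all monotoneb s -> monotone (compose s).
Proof.
elim/last_ind: s => [|s f IHs]; first by rewrite /monotone /=; lra.
rewrite all_rcons compose_rcons => /andP[/monotonebP f_mono /IHs s_mono].
exact: Rmult_lt_0_compat.
Qed.

Lemma identicalbP f : reflect (identical f) (identicalb f).
Proof.
by rewrite /identicalb; case: ClassicalDescription.excluded_middle_informative => h; constructor.
Qed.

Lemma compose_filter_nonid s : compose [seq f <- s | ~~ identicalb f] = compose s.
Proof.
elim/last_ind: s => [//|s f IHs].
rewrite filter_rcons compose_rcons; case: identicalbP => [/identical_id ->|_] /=.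
- by rewrite id_lcomp IHs.
- by rewrite compose_rcons IHs.
Qed.

Definition blocks_ccw (s : seq linfun) : Prop :=
  forall P X Y S, s = P ++ X ++ Y ++ S -> X <> [::] -> Y <> [::] ->
    0 <= cross (vecf (compose X)) (vecf (compose Y)).

Lemma filter_eq_cat (T : Type) (p : pred T) (s s1 s2 : seq T) :
  filter p s = s1 ++ s2 ->
  exists t1 t2, s = t1 ++ t2 /\ filter p t1 = s1 /\ filter p t2 = s2.
Proof.
elim: s s1 => [|x s IHs] s1 /=.
  by case: s1 s2 => [|//] [|//] _; exists [::], [::].
case px: (p x) => [|]; last first.
  by move/IHs=> [t1 [t2 [-> [<- <-]]]]; exists (x :: t1), t2; rewrite /= px.
case: s1 => [|y s1] /=.
  by move=> s2_eq; exists [::], (x :: s); rewrite /= px.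
by move=> [<- /IHs [t1 [t2 [-> [<- <-]]]]]; exists (x :: t1), t2; rewrite /= px.
Qed.

Lemma blocks_ccw_filter_nonid s :
  blocks_ccw s -> blocks_ccw [seq f <- s | ~~ identicalb f].
Proof.
move=> s_ccw P' X' Y' S' /filter_eq_cat [P [XYS [s_eq [_]]]].
move=> /filter_eq_cat [X [YS [XYS_eq [X_eq]]]] /filter_eq_cat [Y [S [YS_eq [Y_eq _]]]].
move=> X'_nz Y'_nz; subst.
rewrite !compose_filter_nonid; apply: (s_ccw P _ _ S) => //.
- by move=> X0; apply: X'_nz; rewrite X0.
- by move=> Y0; apply: Y'_nz; rewrite Y0.
Qed.

(* The block swap changes the composition at [0] by [- a_S * cross (vec X) (vec Y)]. *)
Lemma cross_of_block_swap P X Y S : monotone (compose S) ->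
  evalf (compose (P ++ X ++ Y ++ S)) 0 <= evalf (compose (P ++ Y ++ X ++ S)) 0 ->
  0 <= cross (vecf (compose X)) (vecf (compose Y)).
Proof.
rewrite /monotone !compose_cat /evalf /cross /vecf /= => S_mono swap_le.
by apply: (Rmult_le_reg_l (la (compose S))) => //; rewrite Rmult_0_r; lra.
Qed.


Lemma foldl_evalf_map (T : Type) (G : T -> linfun) (e : seq T) (g : R -> R) x :
  foldl (fun g i y => evalf (G i) (g y)) g e x = foldl (fun y f => evalf f y) (g x) (map G e).
Proof. by elim: e g => [|i e IHe] g //=; rewrite IHe. Qed.

Lemma fcompE (n : nat) (fs : 'I_n -> linfun) (sigma : {perm 'I_n}) x :
  fcomp fs sigma x = evalf (compose [seq fs (sigma i) | i <- enum 'I_n]) x.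
Proof. by rewrite /fcomp foldl_evalf_map evalf_compose. Qed.

Definition bpos (l m r p : nat) : nat := (bswap l m r p.+1).-1.

Section BlockSwap.
Variables l m r : nat.
Hypotheses (l_pos : (1 <= l)%N) (l_le_m : (l <= m)%N) (m_lt_r : (m < r)%N).

Lemma bposS p : bswap l m r p.+1 = (bpos l m r p).+1.
Proof. by rewrite /bpos /bswap; repeat case: ifP => ?; lia. Qed.

Lemma bpos_lt n p : (r <= n)%N -> (p < n)%N -> (bpos l m r p < n)%N.
Proof. by rewrite /bpos /bswap; repeat case: ifP => ?; lia. Qed.

Lemma bpos_inj : injective (bpos l m r).
Proof. by move=> p q; rewrite /bpos /bswap; repeat case: ifP => ?; lia. Qed.

End BlockSwap.

Lemma map_iota_shift (f : nat -> nat) a b len :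
  (forall i, (i < len)%N -> f (a + i)%N = (b + i)%N) -> map f (iota a len) = iota b len.
Proof.
elim: len a b => [|len IHlen] a b f_shift //=.
have := f_shift 0%N isT; rewrite !addn0 => ->; congr (_ :: _).
by apply: IHlen => i i_lt; have := f_shift i.+1 i_lt; rewrite !addnS !addSn.
Qed.

Lemma map_bpos p x y z : (0 < x)%N -> (0 < y)%N ->
  map (bpos p.+1 (p + x) (p + x + y)) (iota 0 (p + x + y + z)) =
  iota 0 p ++ iota (p + x) y ++ iota p x ++ iota (p + x + y) z.
Proof.
move=> x_pos y_pos.
have -> : (p + x + y + z = p + (y + (x + z)))%N by lia.
rewrite !iotaD !map_cat.
by congr (_ ++ _ ++ _ ++ _); apply: map_iota_shift => i i_lt;
  rewrite /bpos /bswap; repeat case: ifP => ?; lia.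
Qed.

Lemma map_nth_block (T : Type) (x0 : T) (s : seq T) A B C : s = A ++ B ++ C ->
  map (nth x0 s) (iota (size A) (size B)) = B.
Proof.
move=> ->; rewrite map_nth_iota; last by rewrite !size_cat; lia.
by rewrite drop_size_cat // take_size_cat.
Qed.

Lemma block_swap_in_nbhd (T : Type) (n : nat) (F : 'I_n -> T) (sigma : {perm 'I_n})
    P X Y S :
  [seq F (sigma i) | i <- enum 'I_n] = P ++ X ++ Y ++ S -> X <> [::] -> Y <> [::] ->
  exists2 mu, in_nbhd sigma mu & [seq F (mu i) | i <- enum 'I_n] = P ++ Y ++ X ++ S.
Proof.
set L := map _ _ => L_eq X_nz Y_nz.
have [x0 _] : exists x0 : T, True by case: X X_nz L_eq => [//|x0]; exists x0.
have x_pos : (0 < size X)%N by case: X X_nz {L_eq}.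
have y_pos : (0 < size Y)%N by case: Y Y_nz {L_eq}.
have n_eq : n = (size P + size X + size Y + size S)%N.
  by have := congr1 size L_eq; rewrite /L size_map size_enum_ord !size_cat !addnA.
set l := (size P).+1; set m := (size P + size X)%N; set r := (m + size Y)%N.
have l_pos : (1 <= l)%N by [].
have l_le_m : (l <= m)%N by lia.
have m_lt_r : (m < r)%N by lia.
have r_le_n : (r <= n)%N by lia.
have bpos_ord (i : 'I_n) : (bpos l m r i < n)%N by apply: bpos_lt.
pose beta (i : 'I_n) : 'I_n := insubd i (bpos l m r i).
have betaE i : val (beta i) = bpos l m r i by rewrite val_insubd bpos_ord.
have mu_inj : injective (sigma \o beta).
  move=> i j /perm_inj /(congr1 val); rewrite !betaE.
  by move=> /(bpos_inj l_pos l_le_m m_lt_r) /val_inj.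
exists (perm mu_inj).
  exists l, m, r; do 4 split=> //.
  by move=> i j; rewrite bposS // => -[j_eq]; rewrite permE /=; congr (sigma _);
    apply: val_inj; rewrite betaE.
have -> : [seq F (perm mu_inj i) | i <- enum 'I_n] =
          [seq nth x0 L (bpos l m r k) | k <- iota 0 n].
  rewrite -val_enum_ord -map_comp; apply: eq_map => i /=.
  rewrite permE /L (nth_map i); last by rewrite size_enum_ord bpos_lt.
  by congr (F (sigma _)); apply: val_inj; rewrite betaE /= nth_enum_ord.
rewrite (map_comp (nth x0 L)) n_eq map_bpos // !map_cat.
have := map_nth_block x0 (A := [::]) L_eq.
have := map_nth_block x0 (A := P) L_eq.
have := map_nth_block x0 (A := P ++ X) (B := Y) (C := S); rewrite -catA => /(_ L L_eq).
have := map_nth_block x0 (A := P ++ X ++ Y) (B := S) (C := [::]).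
rewrite cats0 -!catA => /(_ L L_eq).
by rewrite !size_cat !addnA /= => -> -> -> ->.
Qed.

Lemma locally_optimal_blocks_ccw (n : nat) (fs : 'I_n -> linfun) (sigma : {perm 'I_n}) :
  (forall i, monotone (fs i)) -> locally_optimal fs sigma ->
  blocks_ccw [seq fs (sigma i) | i <- enum 'I_n].
Proof.
move=> fs_mono sigma_opt P X Y S L_eq X_nz Y_nz.
have [mu mu_nbhd mu_eq] := block_swap_in_nbhd L_eq X_nz Y_nz.
apply: (@cross_of_block_swap P X Y S).
  have : all monotoneb [seq fs (sigma i) | i <- enum 'I_n].
    by elim: (enum _) => //= i e ->; rewrite andbT; apply/monotonebP.
  by rewrite L_eq !all_cat => /and4P [_ _ _ /compose_monotone].
by have := sigma_opt mu mu_nbhd 0; rewrite !fcompE mu_eq L_eq.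
Qed.

Section AngleSequence.

Variable s : seq linfun.
Hypothesis s_ccw : blocks_ccw s.
Hypothesis s_mono : all monotoneb s.
Hypothesis s_nonid : all (fun f => ~~ identicalb f) s.

Local Notation N := (size s).

Definition u (t : nat) : R * R := vecf (nth id_lin s t).
Definition slope_at (t : nat) : R := la (nth id_lin s t).
Definition ang (t : nat) : R := angle (nth id_lin s t).
Definition window (l r : nat) : seq linfun := take (r - l) (drop l s).
Definition V (l r : nat) : R * R := vecf (compose (window l r)).

Lemma nth_nonid t : (t < N)%N -> ~ identical (nth id_lin s t).
Proof. by move=> /(all_nthP id_lin s_nonid) /negP nonid_t /identicalbP. Qed.

Lemma u_polar t : (t < N)%N ->
  0 <= ang t < 2 * PI /\ exists2 rho, 0 < rho & u t = polar rho (ang t).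
Proof.
move=> /nth_nonid /theta_polar [_ [ang_bd [rho [rho_pos u_eq]]]].
by split=> //; exists rho.
Qed.

Lemma u_neq0 t : (t < N)%N -> u t <> (0, 0).
Proof. by move=> /nth_nonid; rewrite identicalE /u /vecf => nonid_t [b0 a1]; apply: nonid_t. Qed.

Lemma slope_at_pos t : (t < N)%N -> 0 < slope_at t.
Proof. by move=> t_lt; apply/monotonebP; apply: (all_nthP id_lin s_mono). Qed.

Lemma V_nil l : V l l = (0, 0).
Proof. by rewrite /V /window subnn take0 /vecf /=; f_equal; ring. Qed.

Lemma V_rcons l r : (l <= r)%N -> (r < N)%N -> V l r.+1 = vlin (slope_at r) (V l r) (u r).
Proof.
move=> l_le r_lt; rewrite /V /window subSn // (take_nth id_lin); last by rewrite size_drop; lia.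
by rewrite compose_rcons vecf_lcomp nth_drop subnKC.
Qed.

Lemma V1 l : (l < N)%N -> V l l.+1 = u l.
Proof. by move=> l_lt; rewrite V_rcons // V_nil /vlin; case: (u l) => x y /=; f_equal; ring. Qed.

Lemma V_cons l r : (l < r)%N -> (r <= N)%N ->
  exists2 A, 0 < A & V l r = vlin A (u l) (V l.+1 r).
Proof.
move=> l_lt r_le; rewrite /V /window (drop_nth id_lin); last lia.
have -> : (r - l = (r - l.+1).+1)%N by lia.
rewrite /= compose_cons vecf_lcomp.
exists (la (compose (take (r - l.+1) (drop l.+1 s)))) => //; apply: compose_monotone.
move: s_mono; rewrite -{1}(cat_take_drop l.+1 s) all_cat => /andP [_].
by rewrite -{1}(cat_take_drop (r - l.+1) (drop l.+1 s)) all_cat => /andP [].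
Qed.

Lemma window_split l m r : (l <= m)%N -> (m <= r)%N -> (r <= N)%N ->
  s = take l s ++ window l m ++ window m r ++ drop r s.
Proof.
move=> l_le m_le r_le; rewrite /window -{1}(cat_take_drop l s); congr (_ ++ _).
rewrite -{1}(cat_take_drop (m - l) (drop l s)) drop_drop subnK //; congr (_ ++ _).
by rewrite -{1}(cat_take_drop (r - m) (drop m s)) drop_drop subnK.
Qed.

Lemma window_neq_nil l r : (l < r)%N -> (r <= N)%N -> window l r <> [::].
Proof.
move=> l_lt r_le /(congr1 size); rewrite /window size_take size_drop.
by case: ifP => _ /= ?; lia.
Qed.

Lemma cross_V_ge0 l m r : (l < m)%N -> (m < r)%N -> (r <= N)%N -> 0 <= cross (V l m) (V m r).
Proof.
move=> l_lt m_lt r_le; apply: (s_ccw (@window_split l m r _ _ _));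
  by [lia | apply: window_neq_nil; lia].
Qed.

Lemma cross_V_eq0 e x y : (forall i, (x <= i < y)%N -> cross e (u i) = 0) ->
  (x <= y)%N -> (y <= N)%N -> cross e (V x y) = 0.
Proof.
elim: y => [|y IHy] par x_le y_le.
  by rewrite (_ : x = 0%N) ?V_nil /cross /=; [ring | lia].
have [x_le_y|->] : (x <= y)%N \/ x = y.+1 by lia.
  rewrite V_rcons // cross_vlinr IHy ?par; try lia; first ring.
  by move=> i i_bd; apply: par; lia.
by rewrite V_nil /cross /=; ring.
Qed.

Lemma cross_u_next_V_ge0 l r : (l < r)%N -> (r <= N)%N -> 0 <= cross (u l) (V l.+1 r).
Proof.
move=> l_lt r_le; have [->|l1_lt] : r = l.+1 \/ (l.+1 < r)%N by lia.
  by rewrite V_nil /cross /=; lra.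
by rewrite -V1; [apply: cross_V_ge0 | lia].
Qed.

Lemma cross_V_u_next_ge0 l r : (l < r)%N -> (r < N)%N -> 0 <= cross (V l r) (u r).
Proof. by move=> l_lt r_lt; rewrite -V1 //; apply: cross_V_ge0. Qed.

Lemma cross_u_V_ge0 l r : (l < r)%N -> (r <= N)%N -> 0 <= cross (u l) (V l r).
Proof.
move=> l_lt r_le; have [A _ ->] := V_cons l_lt r_le.
by rewrite cross_vlinr crossvv; have := cross_u_next_V_ge0 l_lt r_le; lra.
Qed.

Lemma cross_V_u_ge0 l k : (l <= k)%N -> (k < N)%N -> 0 <= cross (V l k.+1) (u k).
Proof.
move=> l_le k_lt; rewrite V_rcons // cross_vlinl crossvv Rplus_0_r.
apply: Rmult_le_pos; first exact/Rlt_le/slope_at_pos.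
have [->|l_lt] : l = k \/ (l < k)%N by lia.
  by rewrite V_nil /cross /=; lra.
exact: cross_V_u_next_ge0.
Qed.

Lemma V_eq0_cross_left p q : (p.+1 < q)%N -> (q <= N)%N -> V p.+1 q = (0, 0) ->
  cross (u p) (u p.+1) <= 0.
Proof.
move=> p_lt q_le V0; have [q_eq|p2_lt] : q = p.+2 \/ (p.+2 < q)%N by lia.
  by rewrite q_eq V1 in V0; [exfalso; apply: (u_neq0 _ V0) | ]; lia.
have [A A_pos V_eq] := V_cons p_lt q_le; rewrite V0 in V_eq.
have : 0 <= cross (V p p.+2) (V p.+2 q) by apply: cross_V_ge0; lia.
rewrite V_rcons ?V1 //; try lia.
rewrite (vlin_eq0 (esym V_eq)) cross_vlinl !cross_vscaler crossvv.
have a_pos : 0 < slope_at p.+1 by apply: slope_at_pos; lia.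
move=> ccw; apply: Rnot_lt_le => cross_pos.
have : 0 < slope_at p.+1 * (A * cross (u p) (u p.+1)).
  by apply: Rmult_lt_0_compat => //; apply: Rmult_lt_0_compat.
lra.
Qed.

Lemma V_eq0_cross_right p q : (p <= q)%N -> (q.+2 <= N)%N -> V p q.+1 = (0, 0) ->
  cross (u q) (u q.+1) <= 0.
Proof.
move=> p_le q_lt V0; have [p_eq|p_lt] : p = q \/ (p < q)%N by lia.
  by rewrite p_eq V1 in V0; [exfalso; apply: (u_neq0 _ V0) | ]; lia.
rewrite V_rcons // in V0; try lia; move/vlin_eq0: V0 => u_eq.
have : 0 <= cross (V p q) (V q q.+2) by apply: cross_V_ge0; lia.
rewrite V_rcons ?V1 //; try lia.
rewrite cross_vlinr u_eq cross_vscaler crossvv cross_vscalel.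
have a_pos : 0 < slope_at q by apply: slope_at_pos; lia.
move=> ccw; have : 0 <= slope_at q * cross (V p q) (u q.+1) by apply: Rmult_le_pos; lra.
lra.
Qed.

Section Antiparallel.

Variables (t : nat) (c : R).
Hypotheses (t_lt : (t.+1 < N)%N) (c_pos : 0 < c) (u_anti : u t.+1 = vscale (- c) (u t)).

(* Both [u t] and [- c u t] precede the window [(t, k]], so both cross it nonnegatively. *)
Lemma antiparallel_next k : (t < k)%N -> (k.+1 < N)%N ->
  (forall i, (t <= i <= k)%N -> cross (u t) (u i) = 0) -> cross (u t) (u k.+1) = 0.
Proof.
move=> t_lt_k k_lt par.
have par_V x : (t <= x <= k.+1)%N -> cross (u t) (V x k.+1) = 0.
  by move=> x_bd; apply: cross_V_eq0; try lia; move=> i i_bd; apply: par; lia.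
have ccw1 : 0 <= cross (V t t.+1) (V t.+1 k.+2) by apply: cross_V_ge0; lia.
have ccw2 : 0 <= cross (V t.+1 t.+2) (V t.+2 k.+2) by apply: cross_V_ge0; lia.
rewrite V1 in ccw1; last lia.
rewrite V1 in ccw2; last lia.
rewrite (@V_rcons t.+1 k.+1) in ccw1; try lia.
rewrite (@V_rcons t.+2 k.+1) in ccw2; try lia.
rewrite cross_vlinr par_V in ccw1; last lia.
rewrite u_anti cross_vlinr !cross_vscalel par_V in ccw2; last lia.
apply: Rle_antisym; nra.
Qed.

Lemma antiparallel_prev k : (k < t)%N ->
  (forall i, (k < i <= t)%N -> cross (u t) (u i) = 0) -> cross (u t) (u k) = 0.
Proof.
move=> k_lt par.
have par_V y : (k < y <= t.+1)%N -> cross (V k.+1 y) (u t) = 0.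
  move=> y_bd; rewrite crossC cross_V_eq0; try lia; first ring.
  by move=> i i_bd; apply: par; lia.
have [A A_pos VA] := V_cons (l := k) (r := t) k_lt (ltnW (ltnW t_lt)).
have [B B_pos VB] := V_cons (l := k) (r := t.+1) (ltnW k_lt) (ltnW t_lt).
have ccw1 : 0 <= cross (V k t) (V t t.+1) by apply: cross_V_ge0; lia.
have ccw2 : 0 <= cross (V k t.+1) (V t.+1 t.+2) by apply: cross_V_ge0; lia.
rewrite V1 in ccw1; last lia.
rewrite V1 in ccw2; last lia.
rewrite VA cross_vlinl par_V in ccw1; last lia.
rewrite VB u_anti cross_vlinl !cross_vscaler par_V in ccw2; last lia.
rewrite crossC in ccw1 ccw2.
have Bc_pos : 0 < B * c by apply: Rmult_lt_0_compat.
apply: Rle_antisym; nra.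
Qed.

Lemma antiparallel_all i : (i < N)%N -> cross (u t) (u i) = 0.
Proof.
have fwd d i' : (t <= i' <= t.+1 + d)%N -> (i' < N)%N -> cross (u t) (u i') = 0.
  elim: d i' => [|d IHd] i' i_bd i_lt.
    have [->|->] : i' = t \/ i' = t.+1 by lia.
      exact: crossvv.
    by rewrite u_anti cross_vscaler crossvv; ring.
  have [i_le|i_eq] : (i' <= t.+1 + d)%N \/ i' = (t.+1 + d).+1 by lia.
    by apply: IHd => //; lia.
  by rewrite i_eq; apply: antiparallel_next; try lia; move=> j j_bd; apply: IHd; lia.
have bwd d i' : (t - d <= i')%N -> (i' < N)%N -> cross (u t) (u i') = 0.
  elim: d i' => [|d IHd] i' i_bd i_lt; first by apply: (fwd i'); lia.
  have [i_ge|i_lt_t] : (t - d <= i')%N \/ (i' < t - d)%N by lia.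
    exact: IHd.
  by apply: antiparallel_prev; try lia; move=> j j_bd; apply: IHd; lia.
by move=> i_lt; apply: (bwd t); lia.
Qed.

End Antiparallel.

Definition dturn (t : nat) : R := turn (ang t) (ang t.+1).

Lemma dturn_bounds t : (t.+1 < N)%N -> 0 <= dturn t < 2 * PI.
Proof.
move=> t_lt; have [t_bd _] := u_polar (ltnW t_lt); have [t1_bd _] := u_polar t_lt.
exact: turn_bounds.
Qed.

Lemma cross_u_succE t : (t.+1 < N)%N ->
  exists2 c, 0 < c & cross (u t) (u t.+1) = c * sin (dturn t).
Proof.
move=> t_lt; have [_ [r1 r1_pos ->]] := u_polar (ltnW t_lt).
have [_ [r2 r2_pos ->]] := u_polar t_lt.
by exists (r1 * r2); [apply: Rmult_lt_0_compat | rewrite cross_polar_turn].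
Qed.

Lemma cross_u_succ_ge0 t : (t.+1 < N)%N -> 0 <= cross (u t) (u t.+1).
Proof. by move=> t_lt; rewrite -{1}V1; [apply: cross_V_u_next_ge0 | ]; lia. Qed.

Lemma dturn_le_PI t : (t.+1 < N)%N -> dturn t <= PI.
Proof.
move=> t_lt; have [c c_pos cross_eq] := cross_u_succE t_lt.
have := cross_u_succ_ge0 t_lt; have := dturn_bounds t_lt; rewrite cross_eq => dt_bd ge0.
apply: Rnot_lt_le => dt_gt; have : sin (dturn t) < 0 by apply: sin_lt_0; lra.
nra.
Qed.

Lemma dturn_PI_antiparallel t : (t.+1 < N)%N -> dturn t = PI ->
  exists2 c, 0 < c & u t.+1 = vscale (- c) (u t).
Proof.
move=> t_lt d_eq.
have [_ [r1 r1_pos u_eq]] := u_polar (ltnW t_lt).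
have [_ [r2 r2_pos u1_eq]] := u_polar t_lt.
have [cos_eq sin_eq] : cos (ang t.+1) = - cos (ang t) /\ sin (ang t.+1) = - sin (ang t).
  move: d_eq; rewrite /dturn /turn; case: (Rle_dec (ang t) (ang t.+1)) => _ /= d_eq.
    by rewrite (_ : ang t.+1 = ang t + PI) ?neg_cos ?neg_sin; last lra.
  by rewrite (_ : ang t = ang t.+1 + PI) ?neg_cos ?neg_sin ?Ropp_involutive; last lra.
exists (r2 / r1); first exact: Rdiv_lt_0_compat.
by rewrite u_eq u1_eq /polar /vscale /= cos_eq sin_eq; f_equal; field; lra.
Qed.

Hypothesis s_noncol : ~ (forall i j, (i < N)%N -> (j < N)%N -> cross (u i) (u j) = 0).

Lemma dturn_lt_PI t : (t.+1 < N)%N -> dturn t < PI.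
Proof.
move=> t_lt; case: (Rle_lt_or_eq_dec _ _ (dturn_le_PI t_lt)) => // d_eq.
have [c c_pos u_anti] := dturn_PI_antiparallel t_lt d_eq.
case: s_noncol => i j i_lt j_lt.
by apply: (cross_eq0_trans (u_neq0 (ltnW t_lt))); apply: (antiparallel_all t_lt c_pos u_anti).
Qed.

Lemma dturn_eq0 t : (t.+1 < N)%N -> cross (u t) (u t.+1) <= 0 -> dturn t = 0.
Proof.
move=> t_lt; have [c c_pos ->] := cross_u_succE t_lt.
have := dturn_bounds t_lt; have := dturn_lt_PI t_lt => dt_lt [dt_ge _] cross_le.
case: (Rle_lt_or_eq_dec _ _ dt_ge) => // dt_pos.
have : 0 < sin (dturn t) by apply: sin_gt_0.
nra.
Qed.

Lemma cross_u_succ_pos t : (t.+1 < N)%N -> 0 < dturn t -> 0 < cross (u t) (u t.+1).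
Proof.
move=> t_lt dt_pos; have [c c_pos ->] := cross_u_succE t_lt.
by apply: Rmult_lt_0_compat => //; apply: sin_gt_0 => //; apply: dturn_lt_PI.
Qed.

Definition wturn (l n : nat) : R := total_turn (ang l) (map ang (iota l.+1 n)).

Lemma wturnS l n : wturn l n.+1 = dturn l + wturn l.+1 n.
Proof. by []. Qed.

Lemma last_ang_iota l n : last (ang l) (map ang (iota l.+1 n)) = ang (l + n).
Proof. by rewrite last_map; elim: n l => [|n IHn] l /=; rewrite ?addn0 ?IHn ?addnS. Qed.

Lemma wturnSr l n : wturn l n.+1 = wturn l n + dturn (l + n).
Proof.
rewrite /wturn -[n.+1]addn1 iotaD map_cat cats1 total_turn_rcons last_ang_iota.
by rewrite addSn.
Qed.

Lemma wturnE l n : exists W : Z, wturn l n = ang (l + n) - ang l + 2 * PI * IZR W.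
Proof.
by exists (Z.of_nat (descents (ang l) (map ang (iota l.+1 n))));
  rewrite /wturn total_turnE last_ang_iota -INR_IZR_INZ.
Qed.

Lemma u_same_angle i j : (i < N)%N -> (j < N)%N -> ang j = ang i ->
  exists2 k, 0 < k & u j = vscale k (u i).
Proof.
move=> i_lt j_lt ang_eq; have [_ [r1 r1_pos u_i]] := u_polar i_lt.
have [_ [r2 r2_pos u_j]] := u_polar j_lt.
exists (r2 / r1); first exact: Rdiv_lt_0_compat.
by rewrite u_i u_j ang_eq /polar /vscale /=; f_equal; field; lra.
Qed.

(* The induction step of [wturn_le_2PI]: the three cases below exhaust the ways a window
   could turn more than once around while its two maximal subwindows do not. *)
Section OverfullWindow.

Variables l m : nat.
Hypotheses (m_pos : (0 < m)%N) (r_lt : ((l + m).+1 < N)%N).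
Hypothesis overfull : 2 * PI < wturn l m.+1.

Local Notation r := (l + m).+1.

Lemma overfull_start_neq0 : wturn l.+1 m <= 2 * PI -> V l.+1 r.+1 <> (0, 0).
Proof.
move=> turn_le V0.
have cross_le : cross (u l) (u l.+1) <= 0 by apply: V_eq0_cross_left V0; lia.
have dturn0 : dturn l = 0 by apply: dturn_eq0 cross_le; lia.
by move: overfull; rewrite wturnS dturn0; lra.
Qed.

Lemma overfull_end_neq0 : wturn l m <= 2 * PI -> V l r <> (0, 0).
Proof.
move=> turn_le V0.
have cross_le : cross (u (l + m)) (u r) <= 0 by apply: V_eq0_cross_right V0; lia.
have dturn0 : dturn (l + m) = 0 by apply: dturn_eq0 cross_le; lia.
by move: overfull; rewrite wturnSr dturn0; lra.
Qed.

(* [V l.+1 r.+1] lies on the arc from [u l.+1] to [u r], which [u l] overshoots. *)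
Lemma overfull_start_short : wturn l.+1 m < 2 * PI -> V l.+1 r.+1 = (0, 0).
Proof.
move=> turn_lt; apply: NNPP => /polar_of_neq0 [rho [psi [rho_pos V_eq]]].
have [_ [r0 r0_pos u_l]] := u_polar (t := l) ltac:(lia).
have [_ [r1 r1_pos u_l1]] := u_polar (t := l.+1) ltac:(lia).
have [_ [r2 r2_pos u_r]] := u_polar (t := r) ltac:(lia).
have sin_start : 0 <= sin (psi - ang l.+1).
  by rewrite -(cross_polar_ge0 _ _ r1_pos rho_pos) -u_l1 -V_eq; apply: cross_u_V_ge0; lia.
have sin_end : 0 <= sin (ang r - psi).
  by rewrite -(cross_polar_ge0 _ _ rho_pos r2_pos) -u_r -V_eq; apply: cross_V_u_ge0; lia.
have [e d_eq] := turnE (ang l) (ang l.+1).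
have [W T_eq] := wturnE l.+1 m; rewrite addSn in T_eq.
have dturn_bd : 0 <= dturn l < PI.
  by have := dturn_bounds (t := l) ltac:(lia); have := dturn_lt_PI (t := l) ltac:(lia); lra.
have al_eq : ang l.+1 = ang l + dturn l + 2 * PI * IZR (- e) by rewrite opp_IZR /dturn; lra.
have be_eq : ang r = ang l.+1 + wturn l.+1 m + 2 * PI * IZR (- W) by rewrite opp_IZR; lra.
have : 2 * PI < dturn l + wturn l.+1 m by rewrite -wturnS.
move=> /(sin_neg_beyond_arc dturn_bd turn_lt) /(_ al_eq be_eq sin_start sin_end).
have := cross_u_next_V_ge0 (l := l) (r := r.+1) ltac:(lia) ltac:(lia).
by rewrite u_l V_eq cross_polar_ge0 //; lra.
Qed.

(* The mirror image of [overfull_start_short], with all angles negated. *)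
Lemma overfull_end_short : wturn l m < 2 * PI -> V l r = (0, 0).
Proof.
move=> turn_lt; apply: NNPP => /polar_of_neq0 [rho [psi [rho_pos V_eq]]].
have [_ [r0 r0_pos u_l]] := u_polar (t := l) ltac:(lia).
have [_ [rm rm_pos u_lm]] := u_polar (t := l + m) ltac:(lia).
have [_ [r2 r2_pos u_r]] := u_polar (t := r) ltac:(lia).
have sin_start : 0 <= sin (- psi - - ang (l + m)).
  have -> : - psi - - ang (l + m) = ang (l + m) - psi by ring.
  by rewrite -(cross_polar_ge0 _ _ rho_pos rm_pos) -u_lm -V_eq; apply: cross_V_u_ge0; lia.
have sin_end : 0 <= sin (- ang l - - psi).
  have -> : - ang l - - psi = psi - ang l by ring.
  by rewrite -(cross_polar_ge0 _ _ r0_pos rho_pos) -u_l -V_eq; apply: cross_u_V_ge0; lia.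
have [e d_eq] := turnE (ang (l + m)) (ang r).
have [W T_eq] := wturnE l m.
have dturn_bd : 0 <= dturn (l + m) < PI.
  by have := dturn_bounds (t := l + m) ltac:(lia); have := dturn_lt_PI (t := l + m) ltac:(lia);
    lra.
have al_eq : - ang (l + m) = - ang r + dturn (l + m) + 2 * PI * IZR (- e).
  by rewrite opp_IZR /dturn; lra.
have be_eq : - ang l = - ang (l + m) + wturn l m + 2 * PI * IZR (- W) by rewrite opp_IZR; lra.
have : 2 * PI < dturn (l + m) + wturn l m by rewrite Rplus_comm -wturnSr.
move=> /(sin_neg_beyond_arc dturn_bd turn_lt) /(_ al_eq be_eq sin_start sin_end).
have -> : - psi - - ang r = ang r - psi by ring.
have := cross_V_u_next_ge0 (l := l) (r := r) ltac:(lia) ltac:(lia).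
by rewrite u_r V_eq cross_polar_ge0 //; lra.
Qed.

(* Both subwindows turn exactly once, so [u r] points along [u l.+1] and [u (l + m)] along
   [u l]; this forces the middle window [V l.+1 r] to vanish. *)
Lemma overfull_exact : wturn l.+1 m = 2 * PI -> wturn l m = 2 * PI -> False.
Proof.
move=> turn_start turn_end.
have [W1 T1_eq] := wturnE l.+1 m; rewrite addSn in T1_eq.
have [W2 T2_eq] := wturnE l m.
have [bd_l _] := u_polar (t := l) ltac:(lia).
have [bd_l1 _] := u_polar (t := l.+1) ltac:(lia).
have [bd_lm _] := u_polar (t := l + m) ltac:(lia).
have [bd_r _] := u_polar (t := r) ltac:(lia).
have [k1 k1_pos u_r] : exists2 k, 0 < k & u r = vscale k (u l.+1).
  by apply: u_same_angle; try lia; apply: (angle_eq_of_full_turn (W := W1)); lra.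
have [k2 k2_pos u_lm] : exists2 k, 0 < k & u (l + m) = vscale k (u l).
  by apply: u_same_angle; try lia; apply: (angle_eq_of_full_turn (W := W2)); lra.
have dturn_pos : 0 < dturn l by move: overfull; rewrite wturnS; lra.
have [A A_pos V_l] := V_cons (l := l) (r := r) ltac:(lia) ltac:(lia).
have cross_l1 : cross (u l.+1) (V l.+1 r) = 0.
  have := cross_u_V_ge0 (l := l.+1) (r := r) ltac:(lia) ltac:(lia).
  have := cross_V_u_next_ge0 (l := l.+1) (r := r) ltac:(lia) ltac:(lia).
  by rewrite u_r cross_vscaler (crossC _ (u l.+1)); nra.
have cross_l : cross (u l) (V l.+1 r) = 0.
  have := cross_u_next_V_ge0 (l := l) (r := r) ltac:(lia) ltac:(lia).
  have := cross_V_u_ge0 (l := l) (k := l + m) ltac:(lia) ltac:(lia).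
  by rewrite u_lm V_l cross_vscaler cross_vlinl crossvv (crossC _ (u l)); nra.
have V0 : V l.+1 r = (0, 0).
  apply: (cross_eq0_independent _ cross_l cross_l1).
  by have := cross_u_succ_pos (t := l) ltac:(lia) dturn_pos; lra.
have := V_eq0_cross_left (p := l) (q := r) ltac:(lia) ltac:(lia) V0.
by have := cross_u_succ_pos (t := l) ltac:(lia) dturn_pos; lra.
Qed.

End OverfullWindow.

Lemma wturn_le_2PI l n : (l + n < N)%N -> wturn l n <= 2 * PI.
Proof.
elim: n l => [|n IHn] l ln_lt; first by rewrite /wturn /=; have := PI_RGT_0; lra.
have [n0|n_pos] : n = 0%N \/ (0 < n)%N by lia.
  rewrite n0 wturnS /wturn /=.
  by have := dturn_lt_PI (t := l) ltac:(lia); have := PI_RGT_0; lra.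
apply: Rnot_lt_le => overfull.
have r_lt : ((l + n).+1 < N)%N by lia.
have [start_lt|start_eq] := Rle_lt_or_eq_dec _ _ (IHn l.+1 ltac:(lia)).
  by apply: (overfull_start_neq0 n_pos r_lt overfull (Rlt_le _ _ start_lt));
    apply: overfull_start_short.
have [end_lt|end_eq] := Rle_lt_or_eq_dec _ _ (IHn l ltac:(lia)).
  by apply: (overfull_end_neq0 n_pos r_lt overfull (Rlt_le _ _ end_lt));
    apply: overfull_end_short.
exact: (overfull_exact n_pos r_lt overfull).
Qed.

Lemma rot_sorted_angles : exists k, sorted Rleb (rot k (map angle s)).
Proof.
have -> : map angle s = map ang (iota 0 N).
  by rewrite -{1}(mkseq_nth id_lin s) /mkseq -map_comp.
case N_eq: N => [|n]; first by exists 0%N.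
have ang_bd t : (t <= n)%N -> 0 <= ang t < 2 * PI.
  by move=> t_le; have [] := u_polar (t := t) ltac:(lia).
have -> : map ang (iota 0 n.+1) = ang 0 :: map ang (iota 1 n) by [].
apply: rot_sorted_of_total_turn.
- by rewrite (last_ang_iota 0 n) add0n; have := ang_bd n (leqnn n); lra.
- by have := ang_bd 0%N isT; lra.
- by apply: (wturn_le_2PI (l := 0)); lia.
Qed.

End AngleSequence.

Lemma colinear_of_parallel (n : nat) (fs : 'I_n -> linfun) :
  (forall i j, ~ identical (fs i) -> ~ identical (fs j) ->
     cross (vecf (fs i)) (vecf (fs j)) = 0) ->
  colinear fs.
Proof.
move=> par; have [[i0 nonid_i0]|all_id] := classic (exists i0, ~ identical (fs i0)).
  exists (angle (fs i0)) => i.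
  have [id_i|nonid_i] := classic (identical (fs i)); first by left; apply: theta_identical.
  have [theta_i [_ [r [r_pos vec_i]]]] := theta_polar nonid_i.
  have [_ [_ [r0 [r0_pos vec_i0]]]] := theta_polar nonid_i0.
  right; exists (angle (fs i)); split=> //.
  have := par i0 i nonid_i0 nonid_i; rewrite vec_i0 vec_i cross_polar.
  by case/Rmult_integral => [/Rmult_integral []|/sin_eq_0_0 //]; lra.
exists 0 => i; left; apply: theta_identical.
by apply: NNPP => nonid_i; apply: all_id; exists i.
Qed.

Section NonIdentical.

Variables (n : nat) (fs : 'I_n -> linfun) (sigma : {perm 'I_n}).

Definition nonid_seq : seq linfun :=
  [seq f <- [seq fs (sigma i) | i <- enum 'I_n] | ~~ identicalb f].

Lemma nonid_seqE :
  nonid_seq = [seq fs (sigma i) | i <- [seq i <- enum 'I_n | ~~ identicalb (fs (sigma i))]].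
Proof. by rewrite /nonid_seq filter_map. Qed.

Lemma nth_nonid_seq k : ~ identical (fs k) ->
  exists2 t, (t < size nonid_seq)%N & nth id_lin nonid_seq t = fs k.
Proof.
move=> nonid_k; set k' := (sigma^-1)%g k; rewrite nonid_seqE.
have k'_in : k' \in [seq i <- enum 'I_n | ~~ identicalb (fs (sigma i))].
  by rewrite mem_filter /k' permKV mem_enum andbT; apply/negP => /identicalbP.
exists (index k' [seq i <- enum 'I_n | ~~ identicalb (fs (sigma i))]).
  by rewrite size_map index_mem.
by rewrite (nth_map k') ?index_mem // nth_index // /k' permKV.
Qed.

Lemma noncolinear_nonid_seq : ~ colinear fs ->
  ~ (forall i j, (i < size nonid_seq)%N -> (j < size nonid_seq)%N ->
       cross (u nonid_seq i) (u nonid_seq j) = 0).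
Proof.
move=> not_colinear all_par; apply/not_colinear/colinear_of_parallel => i j nonid_i nonid_j.
have [ti ti_lt <-] := nth_nonid_seq nonid_i; have [tj tj_lt <-] := nth_nonid_seq nonid_j.
exact: all_par.
Qed.

Lemma angle_seqE : angle_seq fs sigma = [seq angle f | f <- nonid_seq].
Proof.
rewrite nonid_seqE /angle_seq -map_comp.
elim: (enum 'I_n) => //= i e IHe; case: identicalbP => [//|nonid_i] /=.
by have [-> _] := theta_polar nonid_i; rewrite IHe.
Qed.

End NonIdentical.

Theorem mainTheorem8 (n : nat) (fs : 'I_n -> linfun) :
  (forall i : 'I_n, monotone (fs i)) ->
  ~ colinear fs ->
  forall sigma : {perm 'I_n}, locally_optimal fs sigma -> counterclockwise fs sigma.
Proof.
move=> fs_mono not_colinear sigma sigma_opt.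
have s_ccw : blocks_ccw (nonid_seq fs sigma).
  exact/blocks_ccw_filter_nonid/locally_optimal_blocks_ccw.
have s_mono : all monotoneb (nonid_seq fs sigma).
  by rewrite nonid_seqE all_map; apply/allP => i _; apply/monotonebP.
have s_nonid : all (fun f => ~~ identicalb f) (nonid_seq fs sigma) by exact: filter_all.
have [k sorted_k] :=
  rot_sorted_angles s_ccw s_mono s_nonid (@noncolinear_nonid_seq _ _ sigma not_colinear).
by exists k; rewrite angle_seqE.
Qed.
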